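(* Let $G_n$, $m$ and $T$ be as in the context. A minimal walk in $G_n$ (starting at $m$) is an Eulerian cycle of $G_n$ if and only if $T$ is a tree, i.e. $T$ contains no directed cycle (equivalently, $T$ is a spanning tree of $G_n$ in which every vertex has a directed path to $m$).
   Context: Let $A$ be a finite alphabet with a linear order $<$, extended to the lexicographic order on words: $x<y$ if $x$ is a proper prefix of $y$, or $x=uav$, $y=ubw$ with $a,b\in A$, $a<b$. Let $\mathcal{F}$ be a set of words over $A$ (forbidden words). A word $w$ is in the language if the bi-infinite periodic sequence $\cdots www\cdots$ contains no element of $\mathcal{F}$ as a factor; $W_k$ denotes the set of words of length $k$ in the language. Fix $n\geq 1$ and consider the digraph with vertex set $A^n$ and arcs $(as,sb)$ for $a,b\in A$, $s\in A^{n-1}$, $asb\in W_{n+1}$, the label of $(as,sb)$ being $b$. The de Bruijn graph of span $n$, $G_n$, is a strongly connected component of maximum size of this digraph; vertices are identified with their words. Let $m$ be the vertex of $G_n$ whose word is lexicographically largest. For each vertex $v$, let $e(v)$ be the arc of $G_n$ with tail $v$ having maximum label. $T$ is the spanning subgraph of $G_n$ with arc set $\{e(v): v\in V(G_n), v\neq m\}$. A minimal walk is the walk constructed as follows: start at $m$; at the current vertex, follow the arc of smallest label among the not-yet-used arcs with tail at this vertex; stop when no unused arc leaves the current vertex. An Eulerian cycle is a closed walk using every arc of $G_n$ exactly once. *)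

From HB Require Import structures.
From mathcomp Require Import all_boot all_order.
From mathcomp Require Import boolp.
Set Implicit Arguments.
Unset Strict Implicit.
Unset Printing Implicit Defensive.
Import Order.TTheory.

Section DeBruijn.
Variables (disp : Order.disp_t) (A : finOrderType disp).

Fixpoint lexlt (x y : seq A) : bool :=
  match x, y with
  | [::], _ :: _ => true
  | a :: x', b :: y' => (a < b)%O || ((a == b) && lexlt x' y')
  | _, _ => false
  end.

(* u is a factor of the bi-infinite periodic sequence ... w w w ... *)
Definition per_factor (u w : seq A) : Prop :=
  exists2 i, i < size w &
    u = take (size u) (drop i (flatten (nseq (size u).+1 w))).

Definition inL (F : seq A -> Prop) (w : seq A) : Prop :=
  forall u, F u -> ~ per_factor u w.

Variables (F : seq A -> Prop) (k : nat).
Local Notation n := k.+1.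
Local Notation V := (n.-tuple A).

(* the label of an arc (as, sb) is b, the last letter of its head *)
Definition label (v : V) : A := tnth v ord_max.

(* arc (as, sb) of the full digraph on A^n iff asb in W_{n+1} *)
Definition darc (u v : V) : bool :=
  (behead u == take k v) && `[< inL F (rcons u (label v)) >].

Definition is_scc (C : {set V}) : Prop :=
  C != set0 /\
  forall u, u \in C -> forall v, (v \in C) = (connect darc u v && connect darc v u).

Definition max_scc (C : {set V}) : Prop :=
  is_scc C /\ forall C', is_scc C' -> #|C'| <= #|C|.

Variable (C : {set V}).

Definition garc (u v : V) : bool := [&& u \in C, v \in C & darc u v].

Variable (m : V).

Definition Tarc (u v : V) : bool :=
  [&& u != m, garc u v & [forall w, garc u w ==> (label w <= label v)%O]].

Definition T_acyclic : Prop := forall u v, Tarc u v -> ~~ connect Tarc v u.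

Definition next_arc (x : V) (used : seq (V * V)) : option V :=
  [pick w | [&& garc x w, (x, w) \notin used &
     [forall w', (garc x w' && ((x, w') \notin used)) ==> (label w <= label w')%O]]].

Fixpoint mwalk (fuel : nat) (x : V) (used : seq (V * V)) : seq (V * V) :=
  match fuel with
  | 0 => [::]
  | f.+1 => if next_arc x used is Some w then (x, w) :: mwalk f w (rcons used (x, w))
            else [::]
  end.

(* the minimal walk starting at m (as the sequence of its arcs); the fuel
   exceeds the number of arcs, so the walk stops only when no unused arc
   leaves the current vertex *)
Definition min_walk : seq (V * V) := mwalk #|{: V * V}|.+1 m [::].

Definition closed_walk (p : seq (V * V)) : bool :=
  all (fun e => garc e.1 e.2) p &&
  match p with
  | [::] => true
  | e :: p' => path (fun e1 e2 : V * V => e1.2 == e2.1) e p' && ((last e p').2 == e.1)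
  end.

Definition eulerian (p : seq (V * V)) : bool :=
  [&& closed_walk p, uniq p & [forall u, forall v, garc u v ==> ((u, v) \in p)]].

End DeBruijn.

From mathcomp Require Import all_boot all_order.
From mathcomp Require Import boolp zify.
Import Order.TTheory.
Set Implicit Arguments. Unset Strict Implicit. Unset Printing Implicit Defensive.

(* The language is closed under rotation, so [w b] is in it iff [b w] is: every vertex
   of the de Bruijn graph has as many in-arcs as out-arcs, and every arc [as -> sb] lies
   on the cycle of length-[n] factors of the cyclic word [asb], hence inside its strongly
   connected component; so [G_n] is balanced.  In a balanced graph the minimal walk uses
   no arc twice and can only get stuck back at [m].  It leaves each vertex [x] along arcs
   of increasing label, so [e(x)] is the last arc it uses out of [x].  If [T] is acyclic
   but some arc is unused, the set of vertices with an unused out-arc avoids [m] and is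
   closed under [e]: [e(x)] is then unused, so its head has an unused in-arc and, by
   balance, an unused out-arc; this contradicts acyclicity.  Conversely, if the walk is
   Eulerian, the position of [e(x)] in the walk strictly increases along the arcs of [T],
   so [T] has no cycle. *)

Section Acyclic.
Variables (T : finType) (e : rel T).

Lemma acyclic_of_potential (f : T -> nat) :
  (forall u v, e u v -> f u < f v) -> forall u v, e u v -> ~~ connect e v u.
Proof.
move=> f_lt u v euv; apply/negP => /connectP [p].
have f_path x q : path e x q -> f x <= f (last x q).
  elim: q x => //= y q IHq x /andP [exy /IHq]; exact/leq_trans/ltnW/f_lt.
move=> /f_path f_vu u_last; have := f_lt _ _ euv.
by rewrite ltnNge u_last f_vu.
Qed.

Lemma acyclic_succ_closed_set0 (S : {set T}) :
  (forall u v, e u v -> ~~ connect e v u) ->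
  (forall x, x \in S -> exists2 y, e x y & y \in S) -> S = set0.
Proof.
move=> acyc S_succ; apply/setP => x0; rewrite inE; apply/negP => Sx0.
case: (arg_minnP (fun x => #|[set z | connect e x z]|) Sx0) => x Sx x_min.
case: (S_succ x Sx) => y exy Sy.
have : [set z | connect e y z] \proper [set z | connect e x z].
  rewrite properE; apply/andP; split.
    by apply/subsetP => z; rewrite !inE; apply/connect_trans/connect1.
  by apply/subsetPn; exists x; rewrite !inE ?connect0 ?acyc.
by move/proper_card; rewrite ltnNge x_min.
Qed.

End Acyclic.

Lemma count_fst_uniq (T1 : eqType) (T2 : finType) (s : seq (T1 * T2)) z :
  uniq s -> count (pred1 z) (map fst s) = #|[set y | (z, y) \in s]|.
Proof.
move=> s_uniq; rewrite count_map -size_filter.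
have snd_uniq : uniq (map snd (filter (preim fst (pred1 z)) s)).
  rewrite map_inj_in_uniq ?filter_uniq //.
  by move=> [a b] [a' b']; rewrite !mem_filter => /andP [/eqP /= -> _] /andP [/eqP /= -> _] /= ->.
rewrite -(size_map snd) -(card_uniqP snd_uniq); apply: eq_card => y; rewrite inE.
apply/mapP/idP => [[[a b]] | zy]; last by exists (z, y); rewrite // mem_filter /= eqxx.
by rewrite mem_filter => /andP [/eqP /= -> ?] ->.
Qed.

Lemma count_snd_uniq (T1 : eqType) (T2 : finType) (s : seq (T2 * T1)) z :
  uniq s -> count (pred1 z) (map snd s) = #|[set y | (y, z) \in s]|.
Proof.
pose swap (e : T2 * T1) := (e.2, e.1).
have swap_inj : injective swap by move=> [a b] [c d] [-> ->].
move=> s_uniq; have -> : map snd s = map fst (map swap s) by rewrite -map_comp.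
rewrite count_fst_uniq ?map_inj_uniq //; apply: eq_card => y.
by rewrite !inE -[(z, y)]/(swap (y, z)) (mem_map swap_inj).
Qed.

Lemma path_adjacent_arcsE (T : eqType) (e : T * T) p :
  path (fun e1 e2 : T * T => e1.2 == e2.1) e p = (map fst p == belast e.2 (map snd p)).
Proof. by elim: p e => [|e' p IHp] e //=; rewrite IHp eqseq_cons eq_sym. Qed.

Lemma size_flatten_nseq (T : Type) N (s : seq T) : size (flatten (nseq N s)) = N * size s.
Proof. by rewrite size_flatten /shape map_nseq sumn_nseq mulnC. Qed.

Lemma nth_flatten_nseq (T : Type) (x0 : T) N (s : seq T) i :
  i < N * size s -> nth x0 (flatten (nseq N s)) i = nth x0 s (i %% size s).
Proof.
elim: N i => [|N IHN] i; first by rewrite mul0n.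
rewrite mulSn /= nth_cat => i_lt; case: ltnP => i_s; first by rewrite modn_small.
rewrite IHN; last by lia.
by rewrite -{2}(subnK i_s) modnDr.
Qed.

Lemma nth_rot1 (T : Type) (x0 : T) (s : seq T) t : t < size s ->
  nth x0 (rot 1 s) t = nth x0 s (t.+1 %% size s).
Proof.
case: s => // a s' /= t_lt; rewrite rot1_cons nth_rcons.
case: ltnP => t_s; first by rewrite modn_small.
have -> : t = size s' by lia.
by rewrite modnn eqxx.
Qed.

Section PeriodicFactor.
Variables (disp : Order.disp_t) (A : finOrderType disp).

Lemma per_factorE (x0 : A) (u s : seq A) : 0 < size s ->
  per_factor u s <-> exists2 i, i < size s &
    forall t, t < size u -> nth x0 u t = nth x0 s ((i + t) %% size s).
Proof.
move=> s_gt0; set L := size u.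
have L_le : L <= L * size s by rewrite leq_pmulr.
have window_size i : i < size s -> size (take L (drop i (flatten (nseq L.+1 s)))) = L.
  move=> i_lt; rewrite size_take size_drop size_flatten_nseq mulSn.
  by case: ltnP => //; lia.
have window_nth i t : i < size s -> t < L ->
    nth x0 (take L (drop i (flatten (nseq L.+1 s)))) t = nth x0 s ((i + t) %% size s).
  move=> i_lt t_lt; rewrite nth_take // nth_drop nth_flatten_nseq // mulSn; lia.
split=> [[i i_lt u_eq] | [i i_lt u_nth]]; exists i => //.
  by move=> t t_lt; rewrite u_eq window_nth.
by apply: (@eq_from_nth _ x0) => [|t t_lt]; rewrite ?window_size ?window_nth ?u_nth.
Qed.

Lemma per_factor_rot1 (u s : seq A) : per_factor u (rot 1 s) -> per_factor u s.
Proof.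
case: s => [|a s']; first by case.
set s := a :: s'; have s_gt0 : 0 < size s by [].
rewrite (per_factorE a) ?size_rot // (per_factorE a) //.
case=> i i_lt u_nth; exists (i.+1 %% size s); first by rewrite ltn_mod.
move=> t t_lt; rewrite u_nth // nth_rot1 ?ltn_mod //.
by rewrite modnDml -[((i + t) %% size s).+1]addn1 modnDml addn1 addSn.
Qed.

Lemma inL_rot (F : seq A -> Prop) j s : inL F s -> inL F (rot j s).
Proof.
move=> sL; elim: j => [|j IHj]; first by rewrite rot0.
case: (ltnP j (size s)) => [j_lt | j_ge]; last by rewrite rot_oversize // leqW.
by rewrite rotS // => u Fu /per_factor_rot1; apply: IHj.
Qed.

End PeriodicFactor.

Section DeBruijnArcs.
Variables (disp : Order.disp_t) (A : finOrderType disp) (F : seq A -> Prop) (k : nat).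
Local Notation V := (k.+1.-tuple A).
Local Notation darc := (@darc _ _ F k).

Lemma label_nth (x0 : A) (v : V) : label v = nth x0 v k.
Proof. by rewrite /label (tnth_nth x0). Qed.

Lemma rcons_take_label (v : V) : rcons (take k v) (label v) = v.
Proof. by rewrite (label_nth (label v)) -take_nth ?size_tuple // take_oversize ?size_tuple. Qed.

Lemma darc_label_inj (x y y' : V) : darc x y -> darc x y' -> label y = label y' -> y = y'.
Proof.
case/andP=> /eqP xy _ /andP [/eqP xy' _] eq_label; apply: val_inj.
by rewrite /= -rcons_take_label -[in RHS]rcons_take_label -xy -xy' eq_label.
Qed.

Lemma darc_inL (x y : V) : darc x y -> inL F (rcons x (label y)).
Proof. by case/andP=> _ /asboolP. Qed.

(* The length-[n] factor at position [j] of the cyclic word [x b]; the default [x] of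
   [insubd] is never used. *)
Definition rot_window (x : V) (b : A) j : V := insubd x (take k.+1 (rot j (rcons x b))).

Lemma rot_windowE (x : V) b j : rot_window x b j = take k.+1 (rot j (rcons x b)) :> seq A.
Proof. by rewrite val_insubd size_take size_rot size_rcons size_tuple ltnSn eqxx. Qed.

Lemma rot_window0 (x : V) b : rot_window x b 0 = x.
Proof. by apply: val_inj; rewrite /= rot_windowE rot0 -cats1 -{1}(size_tuple x) take_size_cat. Qed.

Lemma rot_window_size (x : V) b : rot_window x b k.+2 = x.
Proof.
have -> : k.+2 = size (rcons x b) by rewrite size_rcons size_tuple.
by apply: val_inj; rewrite /= rot_windowE rot_size -[in RHS](rot_window0 x b) rot_windowE rot0.
Qed.

Lemma rot_window1 (x y : V) : darc x y -> rot_window x (label y) 1 = y.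
Proof.
case/andP=> /eqP x_y _; apply: val_inj.
rewrite /= rot_windowE -[tval y](rcons_take_label y) -x_y.
case: x {x_y} => [[|a x'] //= /eqP [x_size]].
by rewrite rot1_cons -cats1 take_size_cat // size_rcons x_size.
Qed.

Lemma darc_rot_window (x : V) b j : inL F (rcons x b) -> j < k.+2 ->
  darc (rot_window x b j) (rot_window x b j.+1).
Proof.
move=> xbL j_lt; have rL := inL_rot (j := j) xbL.
have r_size : size (rot j (rcons x b)) = k.+2 by rewrite size_rot size_rcons size_tuple.
have win_Sj : rot_window x b j.+1 = behead (rot j (rcons x b)) :> seq A.
  rewrite rot_windowE rotS; last by rewrite size_rcons size_tuple.
  move: r_size; case: (rot j _) => [|a r] //= [r_size].
  by rewrite rot1_cons -cats1 -r_size take_size_cat.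
move: r_size rL (rot_windowE x b j) win_Sj; case: (rot j _) => [|a r] //= _ rL win_j win_Sj.
apply/andP; split; first by rewrite win_j win_Sj.
apply/asboolP; have -> : rot_window x b j = a :: take k (rot_window x b j.+1) :> seq A.
  by rewrite win_j win_Sj.
by rewrite /= rcons_take_label win_Sj.
Qed.

Lemma connect_rot_window (x : V) b i d : inL F (rcons x b) -> i + d <= k.+2 ->
  connect darc (rot_window x b i) (rot_window x b (i + d)).
Proof.
move=> xbL; elim: d i => [|d IHd] i id_le; first by rewrite addn0.
have i_lt : i < k.+2 by lia.
apply: (connect_trans (connect1 (darc_rot_window xbL i_lt))).
by rewrite -addSnnS; apply: IHd; lia.
Qed.

Lemma darc_connect_rev (u v : V) : darc u v -> connect darc v u.
Proof.
move=> uv; have := connect_rot_window (i := 1) (darc_inL uv) (leqnn k.+2).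
by rewrite rot_window1 // add1n rot_window_size.
Qed.

Lemma card_darc_out (x : V) :
  #|[set y | darc x y]| = #|[set b : A | `[< inL F (rcons x b) >]]|.
Proof.
rewrite -(card_in_imset (f := @label _ _ k)); last first.
  by move=> y y'; rewrite !inE; apply: darc_label_inj.
apply: eq_card => b; rewrite inE; apply/imsetP/asboolP => [[y] | xbL].
  by rewrite inE => /darc_inL + ->.
have y_size : size (rcons (behead x) b) == k.+1 by rewrite size_rcons size_behead size_tuple.
have y_label : label (insubd x (rcons (behead x) b)) = b.
  by rewrite (label_nth b) val_insubd y_size nth_rcons size_behead size_tuple ltnn eqxx.
exists (insubd x (rcons (behead x) b)) => //; rewrite inE; apply/andP; split.
  by rewrite val_insubd y_size -cats1 take_size_cat // size_behead size_tuple.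
by rewrite y_label; apply/asboolP.
Qed.

Lemma card_darc_in (x : V) :
  #|[set a | darc a x]| = #|[set c : A | `[< inL F (c :: x) >]]|.
Proof.
pose hd (a : V) := head (label x) a.
have darc_hd a : darc a x -> a = hd a :: take k x :> seq A.
  by case/andP=> /eqP <- _; case: a => [[|c a']].
rewrite -(card_in_imset (f := hd)); last first.
  move=> a a'; rewrite !inE => /darc_hd ax /darc_hd a'x eq_hd.
  by apply: val_inj; rewrite /= ax a'x eq_hd.
apply: eq_card => c; rewrite inE; apply/imsetP/asboolP => [[a] | cxL].
  by rewrite inE => ax ->; have := darc_inL ax; rewrite (darc_hd _ ax) /= rcons_take_label.
have a_size : size (c :: take k x) == k.+1 by rewrite /= size_take size_tuple ltnSn.
exists (insubd x (c :: take k x)); last by rewrite /hd val_insubd a_size.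
rewrite inE; apply/andP; split; first by rewrite val_insubd a_size.
by apply/asboolP; rewrite val_insubd a_size /= rcons_take_label.
Qed.

Lemma darc_balanced (x : V) : #|[set y | darc x y]| = #|[set y | darc y x]|.
Proof.
rewrite card_darc_out card_darc_in; apply: eq_card => c; rewrite !inE.
apply/asboolP/asboolP => [xcL | cxL]; last by rewrite -rot1_cons; apply: inL_rot.
by have := inL_rot (j := size x) xcL; rewrite -cats1 rot_size_cat.
Qed.

End DeBruijnArcs.

Section StronglyConnectedComponent.
Variables (disp : Order.disp_t) (A : finOrderType disp) (F : seq A -> Prop) (k : nat).
Variable C : {set k.+1.-tuple A}.
Hypothesis C_scc : is_scc F C.

Lemma scc_garc_out x y : x \in C -> garc F C x y = darc F x y.
Proof.
case: C_scc => _ C_conn xC; rewrite /garc xC /=.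
apply/andP/idP => [[] // | xy]; split => //.
by rewrite (C_conn x xC) (darc_connect_rev xy) connect1.
Qed.

Lemma scc_garc_in x y : x \in C -> garc F C y x = darc F y x.
Proof.
case: C_scc => _ C_conn xC; rewrite /garc xC /=.
apply/andP/idP => [[] // | yx]; split => //.
by rewrite (C_conn x xC) (darc_connect_rev yx) connect1.
Qed.

Lemma scc_balanced x : #|[set y | garc F C x y]| = #|[set y | garc F C y x]|.
Proof.
case xC: (x \in C); last by rewrite !(@eq_card _ _ pred0) // => y; rewrite !inE /garc xC ?andbF.
have -> : [set y | garc F C x y] = [set y | darc F x y].
  by apply/setP => y; rewrite !inE scc_garc_out.
have -> : [set y | garc F C y x] = [set y | darc F y x].
  by apply/setP => y; rewrite !inE scc_garc_in.
exact: darc_balanced.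
Qed.

End StronglyConnectedComponent.

Section MinimalWalk.
Variables (disp : Order.disp_t) (A : finOrderType disp) (F : seq A -> Prop) (k : nat).
Local Notation V := (k.+1.-tuple A).
Variables (C : {set V}) (m : V).
Local Notation garc := (garc F C).
Local Notation Tarc := (Tarc F C m).
Local Notation next_arc := (next_arc F C).
Local Notation W := (min_walk F C m).

Lemma garc_label_inj (x y y' : V) : garc x y -> garc x y' -> label y = label y' -> y = y'.
Proof. by case/and3P=> _ _ xy /and3P [_ _ xy']; apply: (darc_label_inj xy xy'). Qed.

Lemma next_arcP (x : V) U y : next_arc x U = Some y ->
  [/\ garc x y, (x, y) \notin U &
      forall y', garc x y' -> (x, y') \notin U -> (label y <= label y')%O].
Proof.
rewrite /next_arc; case: pickP => // y0 /and3P [xy0 y0U /forallP y0_min] [<-].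
by split=> // y' xy' y'U; have := y0_min y'; rewrite xy' y'U.
Qed.

Lemma next_arc_None (x : V) U : next_arc x U = None -> forall y, garc x y -> (x, y) \in U.
Proof.
rewrite /next_arc; case: pickP => // none _ y xy; apply/negPn/negP => yU.
have : [pred y | garc x y & (x, y) \notin U] y by rewrite /= xy yU.
case/(arg_minP (fun y : V => label y)) => y0 /andP [xy0 y0U] y0_min.
have := none y0; rewrite xy0 y0U /= => /negP; apply; apply/forallP => y'.
by apply/implyP => /y0_min.
Qed.

Lemma mwalk_spec f (x : V) U (p := mwalk F C f x U) :
  [/\ map fst p = belast x (map snd p),
      forall e0 i, i < size p ->
        next_arc (nth e0 p i).1 (U ++ take i p) = Some (nth e0 p i).2
    & size p < f -> next_arc (last x (map snd p)) (U ++ p) = None].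
Proof.
rewrite /p {p}; elim: f x U => [|f IHf] x U //=.
case xU: (next_arc x U) => [y|] /=; last by rewrite cats0.
have [chain greedy stuck] := IHf y (rcons U (x, y)).
split; first by rewrite chain.
- by move=> e0 [|i] /=; rewrite ?cats0 // ltnS -cat_rcons => /greedy.
- by rewrite ltnS -cat_rcons.
Qed.

Lemma min_walk_chain : map fst W = belast m (map snd W).
Proof. by case: (mwalk_spec #|{: V * V}|.+1 m [::]). Qed.

Lemma min_walk_greedy e0 i : i < size W ->
  next_arc (nth e0 W i).1 (take i W) = Some (nth e0 W i).2.
Proof. by case: (mwalk_spec #|{: V * V}|.+1 m [::]) => _ greedy _ /(greedy e0). Qed.

Lemma min_walk_garc e : e \in W -> garc e.1 e.2.
Proof. by case/(nthP e) => i iW <-; case: (next_arcP (min_walk_greedy e iW)). Qed.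

Lemma min_walk_uniq : uniq W.
Proof.
apply/(uniqP (m, m)) => i j; rewrite !inE => iW jW eq_ij.
wlog lt_ij : i j iW jW eq_ij / i < j.
  by move=> wlog_ij; case: (ltngtP i j) => // [/wlog_ij | /wlog_ij ->] //; apply.
case: (next_arcP (min_walk_greedy (m, m) jW)) => _; rewrite -surjective_pairing -eq_ij.
by rewrite -(nth_take _ lt_ij) mem_nth // size_take jW.
Qed.

Lemma min_walk_stuck : next_arc (last m (map snd W)) W = None.
Proof.
case: (mwalk_spec #|{: V * V}|.+1 m [::]) => _ _; rewrite cat0s; apply.
by rewrite ltnS -(card_uniqP min_walk_uniq) max_card.
Qed.

Lemma min_walk_label_le x y y' : (x, y) \in W -> garc x y' ->
  index (x, y) W <= index (x, y') W -> (label y <= label y')%O.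
Proof.
move=> xyW xy' le_index; have iW : index (x, y) W < size W by rewrite index_mem.
case: (next_arcP (min_walk_greedy (x, y) iW)); rewrite nth_index //= => _ _; apply=> //.
by apply/negP => /index_ltn; rewrite ltnNge le_index.
Qed.

Lemma Tarc_garc x y : Tarc x y -> garc x y.
Proof. by case/and3P. Qed.

Lemma Tarc_label_max x y y' : Tarc x y -> garc x y' -> (label y' <= label y)%O.
Proof. by case/and3P=> _ _ /forallP /(_ y') /implyP. Qed.

Lemma Tarc_functional x y y' : Tarc x y -> Tarc x y' -> y = y'.
Proof.
move=> xy xy'; apply: garc_label_inj (Tarc_garc xy) (Tarc_garc xy') _.
apply/le_anti; rewrite (Tarc_label_max xy (Tarc_garc xy')).
by rewrite (Tarc_label_max xy' (Tarc_garc xy)).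
Qed.

Lemma Tarc_exists x y : x != m -> garc x y -> exists y0, Tarc x y0.
Proof.
move=> xm; rewrite -[garc x y]/([pred y | garc x y] y).
case/(arg_maxP (fun y : V => label y)) => y0 xy0 y0_max; exists y0.
by rewrite /Tarc xm [garc x y0]xy0; apply/forallP => y'; apply/implyP => /y0_max.
Qed.

Lemma Tarc_last_exit x y y' : Tarc x y -> garc x y' -> (x, y) \in W ->
  index (x, y') W <= index (x, y) W.
Proof.
move=> xy xy' xyW; rewrite leqNgt; apply/negP => lt_index.
have eq_y : y = y'.
  apply: (garc_label_inj (Tarc_garc xy) xy'); apply/le_anti.
  by rewrite (Tarc_label_max xy xy') (min_walk_label_le xyW xy') // ltnW.
by move: lt_index; rewrite eq_y ltnn.
Qed.

Lemma Tarc_unused x y y' : Tarc x y -> garc x y' -> (x, y') \notin W -> (x, y) \notin W.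
Proof.
move=> xy xy' xy'W; apply/negP => xyW; have := Tarc_last_exit xy xy' xyW.
by rewrite memNindex // leqNgt index_mem xyW.
Qed.

Hypothesis garc_balanced : forall x, #|[set y | garc x y]| = #|[set y | garc y x]|.

Lemma min_walk_count_ends z : (m == z) + count (pred1 z) (map snd W) =
  count (pred1 z) (map fst W) + (last m (map snd W) == z).
Proof.
have := congr1 (count (pred1 z)) (lastI m (map snd W)).
by rewrite -min_walk_chain -cats1 count_cat /= addn0.
Qed.

Lemma min_walk_ends_at_start : last m (map snd W) = m.
Proof.
apply/eqP/contraT; set z := last m (map snd W) => end_m.
have := min_walk_count_ends z.
rewrite -/z eqxx eq_sym (negbTE end_m) add0n addn1.
rewrite count_fst_uniq ?count_snd_uniq ?min_walk_uniq //.
have -> : [set y | (z, y) \in W] = [set y | garc z y].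
  apply/setP => y; rewrite !inE; apply/idP/idP => [/min_walk_garc // | ].
  exact: next_arc_None min_walk_stuck y.
rewrite garc_balanced => in_used.
have : [set y | (y, z) \in W] \subset [set y | garc y z].
  by apply/subsetP => y; rewrite !inE => /min_walk_garc.
by move/subset_leq_card; rewrite in_used ltnn.
Qed.

Lemma min_walk_cycle : rcons (map fst W) m = m :: map snd W.
Proof. by rewrite (lastI m) min_walk_ends_at_start min_walk_chain. Qed.

Lemma min_walk_used_balanced z : #|[set y | (y, z) \in W]| = #|[set y | (z, y) \in W]|.
Proof.
rewrite -count_snd_uniq -?count_fst_uniq ?min_walk_uniq //.
have := congr1 (count (pred1 z)) min_walk_cycle; rewrite -cats1 count_cat /=; lia.
Qed.

Lemma min_walk_closed : closed_walk F C W.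
Proof.
rewrite /closed_walk; apply/andP; split; first by apply/allP => e /min_walk_garc.
move: min_walk_chain min_walk_ends_at_start; case: W => [|e p] //= [-> p_chain] p_end.
by rewrite path_adjacent_arcsE p_chain eqxx /= -last_map p_end.
Qed.

Lemma min_walk_succ e0 i : i < size W -> (nth e0 W i).2 != m ->
  i.+1 < size W /\ (nth e0 W i.+1).1 = (nth e0 W i).2.
Proof.
move=> iW end_m; have := congr1 (nth m ^~ i.+1) min_walk_cycle.
rewrite /= [in RHS](nth_map e0) // nth_rcons size_map.
case: ltnP => [iSW | ge_iS]; first by rewrite (nth_map e0).
have -> : i.+1 == size W by rewrite eqn_leq ge_iS iW.
by move=> m_end; rewrite -m_end eqxx in end_m.
Qed.

Definition unfinished := [set x | [exists y, garc x y && ((x, y) \notin W)]].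

Lemma start_finished : m \notin unfinished.
Proof.
rewrite inE negb_exists; apply/forallP => y; rewrite negb_and negbK.
case my: (garc m y) => //=; have := min_walk_stuck.
by rewrite min_walk_ends_at_start => /next_arc_None; apply.
Qed.

Lemma unfinished_Tarc x : x \in unfinished -> exists2 y, Tarc x y & y \in unfinished.
Proof.
rewrite inE => /existsP [y1 /andP [xy1 xy1W]].
have xm : x != m.
  by apply: contraNneq start_finished => <-; rewrite inE; apply/existsP; exists y1; rewrite xy1.
case: (Tarc_exists xm xy1) => y xy; exists y => //.
have xyW := Tarc_unused xy xy1 xy1W.
rewrite inE; apply: contraT; rewrite negb_exists => /forallP y_done.
have out_used : [set y' | garc y y'] \subset [set y' | (y, y') \in W].
  apply/subsetP => y'; rewrite !inE; move: (y_done y').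
  by rewrite negb_and negbK => /orP [/negbTE -> |].
have in_unused : [set y' | (y', y) \in W] \proper [set y' | garc y' y].
  rewrite properE; apply/andP; split.
    by apply/subsetP => y'; rewrite !inE => /min_walk_garc.
  by apply/subsetPn; exists x; rewrite !inE ?Tarc_garc.
have := subset_leq_card out_used; rewrite garc_balanced -min_walk_used_balanced.
by rewrite leqNgt proper_card.
Qed.

Lemma acyclic_eulerian : T_acyclic F C m -> eulerian F C W.
Proof.
move=> acyc; rewrite /eulerian min_walk_closed min_walk_uniq /=.
have no_unfinished : unfinished = set0 by apply: acyclic_succ_closed_set0 acyc unfinished_Tarc.
apply/forallP => u; apply/forallP => v; apply/implyP => uv; apply: contraT => uvW.
suff : u \in unfinished by rewrite no_unfinished inE.
by rewrite inE; apply/existsP; exists v; rewrite uv.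
Qed.

Lemma eulerian_mem u v : eulerian F C W -> garc u v -> (u, v) \in W.
Proof. by case/and3P=> _ _ /forallP /(_ u) /forallP /(_ v) /implyP. Qed.

Lemma eulerian_Tarc_index_lt u v w : eulerian F C W -> Tarc u v -> Tarc v w ->
  index (u, v) W < index (v, w) W.
Proof.
move=> euler uv vw; have uvW := eulerian_mem euler (Tarc_garc uv).
have iW : index (u, v) W < size W by rewrite index_mem.
have vm : v != m by case/and3P: vw.
have := min_walk_succ (e0 := (m, m)) iW; rewrite nth_index //= => /(_ vm) [iSW next_v].
set e := nth (m, m) W (index (u, v) W).+1 in next_v.
have ve2 : garc v e.2 by rewrite -next_v; apply: min_walk_garc; rewrite mem_nth.
have := Tarc_last_exit vw ve2 (eulerian_mem euler (Tarc_garc vw)).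
by rewrite -{1}next_v -surjective_pairing index_uniq ?min_walk_uniq.
Qed.

Lemma eulerian_acyclic : eulerian F C W -> T_acyclic F C m.
Proof.
move=> euler; pose psi x := if [pick y | Tarc x y] is Some y then index (x, y) W else size W.
have psiE x y : Tarc x y -> psi x = index (x, y) W.
  move=> xy; rewrite /psi.
  by case: pickP => [y' /(Tarc_functional xy) -> // | /(_ y)]; rewrite xy.
apply: (acyclic_of_potential (f := psi)) => u v uv; rewrite (psiE _ _ uv) /psi.
case: pickP => [w vw | _]; first exact: eulerian_Tarc_index_lt.
by rewrite index_mem eulerian_mem ?Tarc_garc.
Qed.

End MinimalWalk.

Theorem theorem2 (disp : Order.disp_t) (A : finOrderType disp)
  (F : seq A -> Prop) (k : nat) (C : {set k.+1.-tuple A}) (m : k.+1.-tuple A) :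
  max_scc F C ->
  m \in C ->
  (forall v, v \in C -> v != m -> lexlt v m) ->
  (eulerian F C (min_walk F C m) <-> T_acyclic F C m).
Proof.
move=> [C_scc _] _ _; have balanced := scc_balanced C_scc.
by split; [exact: eulerian_acyclic balanced | exact: acyclic_eulerian balanced].
Qed.
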